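(* Let $k \in \mathbb{R}^n$ be a constant vector and consider the dynamics $\dot{x} = k$. Let $\mathcal{X}_0 \subseteq \mathbb{R}^n$ be a nonempty compact convex initial set and let $\mathcal{I} \subseteq \mathbb{R}^n$ be a closed convex location invariant with $\mathcal{X}_0 \cap \mathcal{I} \neq \emptyset$. For $s \ge 0$ let $\mathcal{R}(s) = \mathcal{X}_0 \oplus \{ks\} = \{x + ks \mid x \in \mathcal{X}_0\}$ be the set of states reachable at time $s$, and write $\mathcal{R}(s) \vdash \mathcal{I}$ if $\mathcal{R}(s) \cap \mathcal{I} \neq \emptyset$. Assume that $\mathcal{R}(s) \not\vdash \mathcal{I}$ for some $s \ge 0$, and let $t = \sup\{ s \ge 0 \mid \mathcal{R}(s) \vdash \mathcal{I}\}$ be the exact time at which the reachable states violate the invariant. Let $\delta_C > 0$ (coarse time step) and $\delta_F > 0$ (fine time step). Define the approximate crossing time $t'$ by the following coarse-then-fine search: let $i_C$ be the least positive integer with $\mathcal{R}(i_C \delta_C) \not\vdash \mathcal{I}$, put $t_1 = (i_C - 1)\delta_C$, let $i_F$ be the least nonnegative integer with $\mathcal{R}(t_1 + i_F \delta_F) \not\vdash \mathcal{I}$, and set $t' = t_1 + i_F \delta_F$. Then $|t - t'| \le \delta_F$.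
   Context: The Minkowski sum is $A \oplus B = \{a + b \mid a \in A, b \in B\}$. In the paper's setting the time step $\delta_C$ is $T/10$ and $\delta_F = \delta_C/10$ for a time horizon $T$, and the reachable sets are represented by their support functions $\sup_{\mathcal{X}}(\ell) = \sup\{\ell\cdot x \mid x \in \mathcal{X}\}$; these specific choices are not needed for the claim. *)

From HB Require Import structures.
From mathcomp Require Import all_boot all_order all_algebra.
From mathcomp Require Import all_classical all_reals all_analysis.
Set Implicit Arguments. Unset Strict Implicit. Unset Printing Implicit Defensive.
Import Order.TTheory GRing.Theory Num.Theory.
Import numFieldNormedType.Exports.
Local Open Scope classical_set_scope.
Local Open Scope ring_scope.

Definition convexRn (R : realType) (n : nat) (A : set 'rV[R]_n) : Prop :=
  forall (x y : 'rV[R]_n) (l : R), A x -> A y -> 0 <= l -> l <= 1 ->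
    A (l *: x + (1 - l) *: y).

Definition reach (R : realType) (n : nat) (X0 : set 'rV[R]_n) (k : 'rV[R]_n)
  (s : R) : set 'rV[R]_n := [set x + s *: k | x in X0].

Definition sat (R : realType) (n : nat) (Rs I : set 'rV[R]_n) : Prop :=
  Rs `&` I !=set0.

From HB Require Import structures.
From mathcomp Require Import all_boot all_order all_algebra.
From mathcomp Require Import all_classical all_reals all_analysis.
From mathcomp Require Import lra.
Import Order.TTheory GRing.Theory Num.Theory.
Import numFieldNormedType.Exports.
Local Open Scope classical_set_scope.
Local Open Scope ring_scope.

(** By convexity of [X0] and [I], the times [s >= 0] with [R(s) |- I] form an
    interval starting at 0: if [x1 + b k] lies in [I] and [x0] lies in
    [X0 `&` I], then for [l = a / b] the convex combination
    [l (x1 + b k) + (1 - l) x0 = (l x1 + (1 - l) x0) + a k] witnesses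
    [R(a) |- I].  Hence the exact crossing time [t] lies between any
    satisfied and any violated search time; the fine search brackets [t]
    between two consecutive multiples of [dF] past [t1]. *)

Section ReachableInvariant.
Variables (R : realType) (n : nat) (k : 'rV[R]_n) (X0 I : set 'rV[R]_n).
Hypotheses (convX0 : convexRn X0) (convI : convexRn I) (X0I : X0 `&` I !=set0).

Let meets (s : R) : Prop := sat (reach X0 k s) I.
Let meet_times : set R := [set s | 0 <= s /\ meets s].

Lemma sat_reach0 : meets 0.
Proof.
case: X0I => x [X0x Ix]; exists x; split=> //; exists x => //.
by rewrite scale0r addr0.
Qed.

Lemma sat_reach_le {a b : R} : 0 <= a -> a <= b -> meets b -> meets a.
Proof.
move=> a_ge0 le_ab [_ [[x1 X0x1 <-] Ix1b]].
have [b_gt0|b_le0] := ltP 0 b; last first.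
  have -> : a = 0 by lra.
  exact: sat_reach0.
case: X0I => x0 [X0x0 Ix0].
set l := a / b.
have l_ge0 : 0 <= l by rewrite divr_ge0 // ltW.
have l_le1 : l <= 1 by rewrite ler_pdivrMr // mul1r.
exists (l *: (x1 + b *: k) + (1 - l) *: x0); split; last exact: convI.
exists (l *: x1 + (1 - l) *: x0); first exact: convX0.
by rewrite scalerDr scalerA mulfVK ?gt_eqF // addrAC.
Qed.

Lemma sup_meet_times_bounds (a b : R) :
  0 <= a -> 0 <= b -> meets a -> ~ meets b -> a <= sup meet_times <= b.
Proof.
move=> a_ge0 b_ge0 meets_a not_meets_b.
have ub_b : ubound meet_times b.
  move=> s [s_ge0 meets_s]; rewrite leNgt; apply/negP => lt_bs.
  exact: not_meets_b (sat_reach_le b_ge0 (ltW lt_bs) meets_s).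
have meet_a : meet_times a by [].
apply/andP; split.
- by apply: sup_upper_bound => //; split; [exists a | exists b].
- by apply: ge_sup => //; exists a.
Qed.

End ReachableInvariant.

Theorem mainTheorem1 (R : realType) (n : nat) (k : 'rV[R]_n)
    (X0 I : set 'rV[R]_n) (dC dF : R) (iC iF : nat) :
  X0 !=set0 -> compact X0 -> convexRn X0 ->
  closed I -> convexRn I ->
  X0 `&` I !=set0 ->
  (exists s : R, 0 <= s /\ ~ sat (reach X0 k s) I) ->
  0 < dC -> 0 < dF ->
  (* i_C is the least positive integer with R(i_C dC) not |- I *)
  (0 < iC)%N -> ~ sat (reach X0 k (iC%:R * dC)) I ->
  (forall j : nat, (0 < j)%N -> (j < iC)%N -> sat (reach X0 k (j%:R * dC)) I) ->
  (* i_F is the least nonnegative integer with R(t1 + i_F dF) not |- I,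
     where t1 = (i_C - 1) dC *)
  ~ sat (reach X0 k ((iC.-1)%:R * dC + iF%:R * dF)) I ->
  (forall j : nat, (j < iF)%N ->
     sat (reach X0 k ((iC.-1)%:R * dC + j%:R * dF)) I) ->
  let t := sup [set s : R | 0 <= s /\ sat (reach X0 k s) I] in
  let t' := (iC.-1)%:R * dC + iF%:R * dF in
  `|t - t'| <= dF.
Proof.
move=> _ _ convX0 _ convI X0I _ dC_gt0 dF_gt0 iC_gt0 _ coarse_meets
  fine_not_meets fine_meets /=.
set t1 := (iC.-1)%:R * dC.
have t1_ge0 : 0 <= t1 by rewrite mulr_ge0 // ltW.
have t1_meets : sat (reach X0 k t1) I.
  rewrite /t1; case E: iC.-1 => [|m]; first by rewrite mul0r; exact: sat_reach0.
  by apply: coarse_meets; rewrite // -E ltn_predL.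
case: iF fine_not_meets fine_meets => [|j] fine_not_meets fine_meets.
  by exfalso; apply: fine_not_meets; rewrite mul0r addr0.
have fine_ge0 m : 0 <= t1 + m%:R * dF by rewrite addr_ge0 // mulr_ge0 // ltW.
have /andP[t_ge t_le] := @sup_meet_times_bounds _ _ k _ _ convX0 convI X0I _ _ (fine_ge0 j)
  (fine_ge0 j.+1) (fine_meets j (ltnSn j)) fine_not_meets.
rewrite -addn1 natrD mulrDl mul1r in t_le *.
set t := sup _ in t_ge t_le *.
rewrite ler_norml; apply/andP; split; lra.
Qed.
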